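(* Let $(a_n)_n=[a_{n\varepsilon}]_{\mathrm s}\in\widetilde{\mathbb C}_{\mathrm s}$. Assume that there are $k=[k_\varepsilon]\in\widetilde{\mathbb N}$ with $k_\varepsilon\in\mathbb N$ and $L=[L_\varepsilon]\in\widetilde{\mathbb R}_{>0}$ such that for all sufficiently small $\varepsilon$ and all $n\in\mathbb N$ with $n\ge k_\varepsilon$ (and $n\ge1$), $$|a_{n\varepsilon}|^{1/n}\le L_\varepsilon .$$ If $L<1$, then the hyperseries $\sum_{n\in\widetilde{\mathbb N}}|a_n|$ (where $(|a_n|)_n:=[|a_{n\varepsilon}|]_{\mathrm s}$) converges, and hence also $\sum_{n\in\widetilde{\mathbb N}}a_n$ converges.
   Context: Fix $I=(0,1]$ and a gauge $\rho=(\rho_\varepsilon)_{\varepsilon\in I}$ with $\rho_\varepsilon\in I$ and $\rho_\varepsilon\to0$ as $\varepsilon\to0$. ''$\forall^0\varepsilon$'' means ''for all sufficiently small $\varepsilon\in I$''. A net $(x_\varepsilon)\in\mathbb C^I$ is $\rho$-moderate ($(x_\varepsilon)\in\mathbb C_\rho$) if $\exists N\in\mathbb N\,\forall^0\varepsilon:|x_\varepsilon|\le\rho_\varepsilon^{-N}$, and $\rho$-negligible if $\forall q\in\mathbb N\,\forall^0\varepsilon:|x_\varepsilon|\le\rho_\varepsilon^q$. $\widetilde{\mathbb C}:=\mathbb C_\rho/\{\text{negligible nets}\}$ with classes $[x_\varepsilon]$; $\widetilde{\mathbb R}\subseteq\widetilde{\mathbb C}$ consists of classes of real moderate nets; $\mathrm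 d\rho:=[\rho_\varepsilon]$, $|[z_\varepsilon]|:=[|z_\varepsilon|]$. On $\widetilde{\mathbb R}$: $[x_\varepsilon]\le[y_\varepsilon]$ iff $x_\varepsilon\le y_\varepsilon+z_\varepsilon$ $\forall^0\varepsilon$ for some negligible $(z_\varepsilon)$; $x<y$ iff $\exists m\,\forall^0\varepsilon:y_\varepsilon-x_\varepsilon>\rho_\varepsilon^m$; $\widetilde{\mathbb R}_{>0}:=\{x:x>0\}$. Hypernatural numbers: $\widetilde{\mathbb N}:=\{[n_\varepsilon]\in\widetilde{\mathbb R}:n_\varepsilon\in\mathbb N\ \forall\varepsilon\}$; for each $N\in\widetilde{\mathbb N}$ a representative $(\mathrm{ni}(N)_\varepsilon)$ with all $\mathrm{ni}(N)_\varepsilon\in\mathbb N$ is fixed. Hyperlimit: for a map $n\in\widetilde{\mathbb N}\mapsto a_n\in\widetilde{\mathbb C}$, $l=\lim_{n\in\widetilde{\mathbb N}}a_n$ means $\forall q\in\mathbb N\,\exists M\in\widetilde{\mathbb N}\,\forall n\in\widetilde{\mathbb N}:n\ge M\Rightarrow|a_n-l|<\mathrm d\rho^q$. Hyperseries: a net $(a_{n\varepsilon})_{n\in\mathbb N,\varepsilon\in I}$ of complex numbers is moderate over hypersums if for every $N\in\widetilde{\mathbb N}$ the net $(\sum_{n=0}^{\mathrm{ni}(N)_\varepsilon}a_{n\varepsilon})_\varepsilon$ is $\rho$-moderate; two such nets $(a_{n\varepsilon}),(\bar a_{n\varepsilon})$ are equivalent if for all $N,M\in\widetilde{\mathbb N}$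 the net $(\sum_{n=\mathrm{ni}(N)_\varepsilon}^{\mathrm{ni}(M)_\varepsilon}(a_{n\varepsilon}-\bar a_{n\varepsilon}))_\varepsilon$ is negligible. The quotient is $\widetilde{\mathbb C}_{\mathrm s}$ (resp. $\widetilde{\mathbb R}_{\mathrm s}$ for real nets), with classes $(a_n)_n=[a_{n\varepsilon}]_{\mathrm s}$. For $N,M\in\widetilde{\mathbb N}$, $\sum_{n=N}^Ma_n:=[\sum_{n=\mathrm{ni}(N)_\varepsilon}^{\mathrm{ni}(M)_\varepsilon}a_{n\varepsilon}]$ (empty sums equal $0$). The hyperseries $\sum_{n\in\widetilde{\mathbb N}}a_n$ converges to $s$ if $s=\lim_{N\in\widetilde{\mathbb N}}\sum_{n=0}^Na_n$ exists in $\widetilde{\mathbb C}$. *)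

From Stdlib Require Import Reals List.
From Coquelicot Require Import Coquelicot.
Open Scope R_scope.

(* Index set I = (0,1]; nets are functions R -> _ only used on I. *)

Definition is_gauge (rho : R -> R) : Prop :=
  (forall e, 0 < e <= 1 -> 0 < rho e <= 1) /\
  (forall d, 0 < d -> exists e0, 0 < e0 /\
      forall e, 0 < e < e0 -> e <= 1 -> rho e < d).

Definition eventually0 (P : R -> Prop) : Prop :=
  exists e0, 0 < e0 /\ forall e, 0 < e < e0 -> e <= 1 -> P e.

Definition moderateC (rho : R -> R) (x : R -> C) : Prop :=
  exists N : nat, eventually0 (fun e => Cmod (x e) <= / (rho e ^ N)).
Definition negligibleC (rho : R -> R) (x : R -> C) : Prop :=
  forall q : nat, eventually0 (fun e => Cmod (x e) <= rho e ^ q).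
Definition moderateR (rho : R -> R) (x : R -> R) : Prop :=
  exists N : nat, eventually0 (fun e => Rabs (x e) <= / (rho e ^ N)).
Definition negligibleR (rho : R -> R) (x : R -> R) : Prop :=
  forall q : nat, eventually0 (fun e => Rabs (x e) <= rho e ^ q).

(* order on R~, at the level of representatives *)
Definition leRt (rho : R -> R) (x y : R -> R) : Prop :=
  exists z, negligibleR rho z /\ eventually0 (fun e => x e <= y e + z e).
Definition ltRt (rho : R -> R) (x y : R -> R) : Prop :=
  exists m : nat, eventually0 (fun e => y e - x e > rho e ^ m).

Definition hypernat (rho : R -> R) (n : R -> nat) : Prop :=
  moderateR rho (fun e => INR (n e)).

(* finite sum  sum_{n=lo}^{hi} f n  (empty, i.e. 0, if hi < lo) *)
Definition csum (f : nat -> C) (lo hi : nat) : C :=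
  fold_right Cplus (RtoC 0) (map f (seq lo (S hi - lo))).

Definition hpsum (a : nat -> R -> C) (N : R -> nat) : R -> C :=
  fun e => csum (fun n => a n e) 0 (N e).

Definition mod_hypersums (rho : R -> R) (a : nat -> R -> C) : Prop :=
  forall N, hypernat rho N -> moderateC rho (hpsum a N).

(* hyperlimit of a map Ñ -> C~ (given on representatives) *)
Definition hyperlimit (rho : R -> R) (f : (R -> nat) -> (R -> C)) (l : R -> C)
  : Prop :=
  forall q : nat, exists M, hypernat rho M /\
    forall n, hypernat rho n ->
      leRt rho (fun e => INR (M e)) (fun e => INR (n e)) ->
      ltRt rho (fun e => Cmod (f n e - l e)) (fun e => rho e ^ q).

Definition hyperseries_converges (rho : R -> R) (a : nat -> R -> C) : Prop :=
  mod_hypersums rho a /\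
  exists s, moderateC rho s /\ hyperlimit rho (hpsum a) s.

Definition nroot (n : nat) (x : R) : R :=
  if Req_EM_T x 0 then 0 else Rpower x (/ INR n).

From Stdlib Require Import Reals List Lra Lia ZArith.
From Coquelicot Require Import Coquelicot.
Open Scope R_scope.

(* For small eps the root bound gives |a_{n,eps}| <= L_eps^n for n > k_eps, and 1 - L_eps
   exceeds some rho_eps^m.  The first k_eps terms are controlled by applying moderateness
   over hypersums to the index (at most k_eps) of the largest partial sum, so all partial
   sums of |a_n| are bounded by one moderate net.  Bernoulli's inequality turns the gap
   1 - L_eps >= rho_eps^m into a polynomial rate: the tail of the geometric series beyond
   k_eps + 2 rho_eps^(-q-2m) is at most rho_eps^q / 2.  The hyperlimit of both series is the
   partial sum up to an index that eventually lies beyond all these thresholds. *)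

Lemma sum_f_R0_le_mono (f : nat -> R) (i j : nat) :
  (forall n, 0 <= f n) -> (i <= j)%nat -> sum_f_R0 f i <= sum_f_R0 f j.
Proof.
  intros f_ge0 Hij; induction Hij as [|j _ IH]; simpl; [lra|].
  pose proof (f_ge0 (S j)); lra.
Qed.

Lemma Rabs_sum_f_R0_sub_le (f : nat -> R) (j m n : nat) (B : R) :
  (forall i, 0 <= f i) -> (j <= m)%nat -> (j <= n)%nat ->
  (forall N, (j <= N)%nat -> sum_f_R0 f N - sum_f_R0 f j <= B) ->
  Rabs (sum_f_R0 f n - sum_f_R0 f m) <= B.
Proof.
  intros f_ge0 Hm Hn Htail.
  pose proof (sum_f_R0_le_mono f _ _ f_ge0 Hm).
  pose proof (sum_f_R0_le_mono f _ _ f_ge0 Hn).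
  pose proof (Htail m Hm); pose proof (Htail n Hn).
  apply Rabs_le; lra.
Qed.

Lemma sum_f_R0_sub_le_geometric (f : nat -> R) (Lv : R) (j N : nat) :
  0 <= Lv < 1 -> (forall i, (j < i)%nat -> f i <= Lv ^ i) -> (j <= N)%nat ->
  sum_f_R0 f N - sum_f_R0 f j <= Lv ^ S j / (1 - Lv).
Proof.
  intros HLv Hf HjN.
  enough (Hsharp : sum_f_R0 f N - sum_f_R0 f j <= (Lv ^ S j - Lv ^ S N) / (1 - Lv)).
  { pose proof (pow_le Lv (S N) (proj1 HLv)).
    apply Rle_trans with (1 := Hsharp), Rmult_le_compat_r;
      [apply Rlt_le, Rinv_0_lt_compat|]; lra. }
  induction HjN as [|N HjN IH]; simpl sum_f_R0.
  - unfold Rminus; rewrite !Rplus_opp_r; unfold Rdiv; lra.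
  - assert (f (S N) <= Lv ^ S N) by (apply Hf; lia).
    replace ((Lv ^ S j - Lv ^ S (S N)) / (1 - Lv))
      with ((Lv ^ S j - Lv ^ S N) / (1 - Lv) + Lv ^ S N) by (simpl; field; lra).
    lra.
Qed.

(* From Bernoulli: [Lv (1 + x) <= 1] gives [Lv^j (1 + j x) <= 1]. *)
Lemma geometric_tail_le (Lv x r : R) (j : nat) :
  0 <= Lv -> 0 < x -> Lv + x <= 1 -> 0 < r -> 2 / (r * x ^ 2) <= INR j ->
  Lv ^ S j / (1 - Lv) <= r / 2.
Proof.
  intros HLv Hx HLx Hr Hj.
  assert (Hbern : Lv ^ j * (1 + INR j * x) <= 1).
  { apply Rle_trans with (Lv ^ j * (1 + x) ^ j).
    - apply Rmult_le_compat_l; [apply pow_le; lra | apply poly; lra].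
    - rewrite <- Rpow_mult_distr.
      apply Rle_trans with (1 ^ j); [|rewrite pow1; lra].
      apply pow_incr; split; [apply Rmult_le_pos; lra|].
      apply Rle_trans with ((1 - x) * (1 + x)); [apply Rmult_le_compat_r|]; nra. }
  assert (Hpow : 0 <= Lv ^ j) by (apply pow_le; lra).
  assert (Hrx : 0 < r * x ^ 2) by (apply Rmult_lt_0_compat; [lra | apply pow_lt; lra]).
  assert (Hjx : 2 <= INR j * (r * x ^ 2)).
  { apply Rmult_le_compat_r with (r := r * x ^ 2) in Hj; [|lra].
    unfold Rdiv in Hj; rewrite Rmult_assoc, Rinv_l in Hj; lra. }
  apply Rmult_le_reg_r with (2 * (1 - Lv)); [lra|].
  unfold Rdiv; rewrite Rmult_assoc, <- (Rmult_assoc (/ (1 - Lv))),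
    (Rmult_comm (/ (1 - Lv))), Rmult_assoc, Rinv_l, Rmult_1_r by lra.
  assert (H2P : 2 * Lv ^ j <= r * x).
  { apply Rle_trans with (Lv ^ j * INR j * x * (r * x)); [nra|].
    rewrite <- (Rmult_1_l (r * x)) at 2; apply Rmult_le_compat_r; nra. }
  simpl pow; nra.
Qed.

Lemma sum_f_R0_le_head_geometric (f : nat -> R) (kk : nat) (C Lv x : R) (N : nat) :
  (forall i, 0 <= f i) -> (forall i, (i <= kk)%nat -> f i <= C) ->
  (forall i, (kk < i)%nat -> f i <= Lv ^ i) -> 0 <= Lv -> 0 < x -> Lv + x <= 1 ->
  sum_f_R0 f N <= (INR kk + 1) * C + / x.
Proof.
  intros f_ge0 Hhead Htail HLv Hx HLx.
  assert (Hsum_head : sum_f_R0 f kk <= (INR kk + 1) * C).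
  { rewrite <- S_INR, Rmult_comm, <- sum_cte; apply sum_Rle; auto. }
  assert (Hgeo : Lv ^ S kk / (1 - Lv) <= / x).
  { assert (Lv ^ S kk <= 1) by (rewrite <- (pow1 (S kk)); apply pow_incr; lra).
    apply Rle_trans with (1 / (1 - Lv)).
    - apply Rmult_le_compat_r; [apply Rlt_le, Rinv_0_lt_compat|]; lra.
    - unfold Rdiv; rewrite Rmult_1_l; apply Rinv_le_contravar; lra. }
  pose proof (sum_f_R0_le_mono f N (max N kk) f_ge0 (Nat.le_max_l _ _)).
  pose proof (sum_f_R0_sub_le_geometric f Lv kk (max N kk)
                ltac:(lra) Htail (Nat.le_max_r _ _)).
  lra.
Qed.

Lemma le_pow_of_nroot_le (n : nat) (x l : R) :
  (1 <= n)%nat -> 0 <= x -> nroot n x <= l -> x <= l ^ n.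
Proof.
  unfold nroot; intros Hn Hx Hroot.
  destruct (Req_EM_T x 0) as [->|Hx0].
  - apply pow_le; lra.
  - assert (Hpos : 0 < Rpower x (/ INR n)) by apply exp_pos.
    replace x with (Rpower x (/ INR n) ^ n) at 1.
    + apply pow_incr; lra.
    + rewrite <- Rpower_pow, Rpower_mult, Rinv_l, Rpower_1 by
        (lra || apply not_0_INR; lia).
      reflexivity.
Qed.

Lemma csum_0 (g : nat -> C) : csum g 0 0 = g 0%nat.
Proof. unfold csum; simpl; ring. Qed.

Lemma csum_S (g : nat -> C) (j : nat) : csum g 0 (S j) = (csum g 0 j + g (S j))%C.
Proof.
  unfold csum; rewrite !Nat.sub_0_r, (seq_S (S j)), map_app, fold_right_app, Nat.add_0_l.
  generalize (map g (seq 0 (S j))) as l; intros l.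
  induction l as [|c l IH]; cbn [map fold_right] in *; [ring|]; rewrite IH; ring.
Qed.

Lemma csum_RtoC (f : nat -> R) (j : nat) :
  csum (fun n => RtoC (f n)) 0 j = RtoC (sum_f_R0 f j).
Proof.
  induction j as [|j IH]; [apply csum_0|].
  rewrite csum_S, IH; simpl; rewrite RtoC_plus; reflexivity.
Qed.

Lemma Cmod_csum_le (g : nat -> C) (j : nat) :
  Cmod (csum g 0 j) <= sum_f_R0 (fun n => Cmod (g n)) j.
Proof.
  induction j as [|j IH]; rewrite ?csum_0, ?csum_S; simpl; [lra|].
  eapply Rle_trans; [apply Cmod_triangle | lra].
Qed.

Lemma Cmod_csum_sub_le (g : nat -> C) (m n : nat) :
  Cmod (csum g 0 n - csum g 0 m) <=
  Rabs (sum_f_R0 (fun i => Cmod (g i)) n - sum_f_R0 (fun i => Cmod (g i)) m).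
Proof.
  assert (Hmono : forall m n, (m <= n)%nat -> Cmod (csum g 0 n - csum g 0 m) <=
    sum_f_R0 (fun i => Cmod (g i)) n - sum_f_R0 (fun i => Cmod (g i)) m).
  { intros m' n' Hmn; induction Hmn as [|n' _ IH].
    - replace (csum g 0 m' - csum g 0 m')%C with (RtoC 0) by ring.
      rewrite Cmod_0; lra.
    - rewrite csum_S; simpl.
      replace (csum g 0 n' + g (S n') - csum g 0 m')%C
        with ((csum g 0 n' - csum g 0 m') + g (S n'))%C by ring.
      eapply Rle_trans; [apply Cmod_triangle | lra]. }
  destruct (Nat.le_ge_cases m n) as [Hmn|Hnm].
  - eapply Rle_trans; [apply Hmono, Hmn | apply Rle_abs].
  - rewrite <- Cmod_opp, Rabs_minus_sym.
    replace (- (csum g 0 n - csum g 0 m))%C with (csum g 0 m - csum g 0 n)%C by ring.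
    eapply Rle_trans; [apply Hmono, Hnm | apply Rle_abs].
Qed.

Lemma Cmod_le_of_csum_le (g : nat -> C) (kk : nat) (B : R) :
  (forall j, (j <= kk)%nat -> Cmod (csum g 0 j) <= B) ->
  forall i, (i <= kk)%nat -> Cmod (g i) <= 2 * B.
Proof.
  intros Hsum [|i] Hi.
  - rewrite <- csum_0; pose proof (Cmod_ge_0 (csum g 0 0)).
    pose proof (Hsum 0%nat Hi); lra.
  - replace (g (S i)) with (csum g 0 (S i) + - csum g 0 i)%C by (rewrite csum_S; ring).
    eapply Rle_trans; [apply Cmod_triangle|]; rewrite Cmod_opp.
    pose proof (Hsum (S i) Hi); pose proof (Hsum i ltac:(lia)); lra.
Qed.

Fixpoint argmax_upto (f : nat -> R) (n : nat) : nat :=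
  match n with
  | O => O
  | S p => if Rle_dec (f (S p)) (f (argmax_upto f p)) then argmax_upto f p else S p
  end.

Lemma argmax_upto_le (f : nat -> R) (n : nat) : (argmax_upto f n <= n)%nat.
Proof. induction n; simpl; [lia | destruct Rle_dec; lia]. Qed.

Lemma le_argmax_upto (f : nat -> R) (n i : nat) :
  (i <= n)%nat -> f i <= f (argmax_upto f n).
Proof.
  induction n as [|n IH]; intros Hi.
  - replace i with 0%nat by lia; simpl; lra.
  - simpl; destruct (Nat.eq_dec i (S n)) as [->|Hne]; destruct Rle_dec; try lra.
    all: pose proof (IH ltac:(lia)); lra.
Qed.

Lemma eventually0_and (P Q : R -> Prop) :
  eventually0 P -> eventually0 Q -> eventually0 (fun e => P e /\ Q e).
Proof.
  intros [e1 [He1 HP]] [e2 [He2 HQ]]; exists (Rmin e1 e2); split.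
  - apply Rmin_pos; assumption.
  - intros e He He_le; pose proof (Rmin_l e1 e2); pose proof (Rmin_r e1 e2).
    split; [apply HP | apply HQ]; auto; lra.
Qed.

Lemma eventually0_mono (P Q : R -> Prop) :
  (forall e, P e -> Q e) -> eventually0 P -> eventually0 Q.
Proof. intros HPQ [e0 [He0 HP]]; exists e0; split; auto. Qed.

Lemma eventually0_gauge_lt (rho : R -> R) (d : R) :
  is_gauge rho -> 0 < d -> eventually0 (fun e => 0 < rho e <= 1 /\ rho e < d).
Proof.
  intros [Hrange Hlim] Hd; destruct (Hlim d Hd) as [e0 [He0 Hsmall]].
  exists (Rmin e0 1); split; [apply Rmin_pos; lra|].
  intros e He He_le; pose proof (Rmin_l e0 1); pose proof (Rmin_r e0 1).
  split; [apply Hrange | apply Hsmall]; lra.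
Qed.

Lemma inv_pow_le_mono (r : R) (m n : nat) :
  0 < r <= 1 -> (m <= n)%nat -> / r ^ m <= / r ^ n.
Proof.
  intros Hr Hmn; rewrite <- !pow_inv; apply Rle_pow; [|exact Hmn].
  rewrite <- Rinv_1; apply Rinv_le_contravar; lra.
Qed.

Section ModerateNets.

Variable rho : R -> R.
Hypothesis rho_gauge : is_gauge rho.

Lemma moderateR_le (x y : R -> R) :
  moderateR rho y -> eventually0 (fun e => Rabs (x e) <= Rabs (y e)) -> moderateR rho x.
Proof.
  intros [N HN] Hxy; exists N.
  eapply eventually0_mono; [|apply eventually0_and; [exact HN | exact Hxy]].
  intros e [Hy Hx]; lra.
Qed.

Lemma moderateC_of_le (x : R -> C) (y : R -> R) :
  moderateR rho y -> eventually0 (fun e => Cmod (x e) <= y e) -> moderateC rho x.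
Proof.
  intros [N HN] Hxy; exists N.
  eapply eventually0_mono; [|apply eventually0_and; [exact HN | exact Hxy]].
  intros e [Hy Hx]; pose proof (Rle_abs (y e)); lra.
Qed.

Lemma moderateR_const (c : R) : moderateR rho (fun _ => c).
Proof.
  exists 1%nat.
  eapply eventually0_mono; [|apply (eventually0_gauge_lt rho (/ (Rabs c + 1)))];
    [|exact rho_gauge | pose proof (Rabs_pos c); apply Rinv_0_lt_compat; lra].
  intros e [Hr Hrc]; rewrite pow_1.
  apply Rinv_lt_contravar in Hrc; [|pose proof (Rabs_pos c); nra].
  rewrite Rinv_inv in Hrc; lra.
Qed.

Lemma moderateR_inv_pow (m : nat) : moderateR rho (fun e => / rho e ^ m).
Proof.
  exists m; eapply eventually0_mono; [|apply (eventually0_gauge_lt rho 1); auto; lra].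
  intros e [Hr _]; rewrite Rabs_right; [lra|].
  apply Rle_ge, Rlt_le, Rinv_0_lt_compat, pow_lt; lra.
Qed.

Lemma moderateR_mult (x y : R -> R) :
  moderateR rho x -> moderateR rho y -> moderateR rho (fun e => x e * y e).
Proof.
  intros [N1 H1] [N2 H2]; exists (N1 + N2)%nat.
  eapply eventually0_mono; [|apply eventually0_and; [exact H1 | exact H2]].
  intros e [Hx Hy]; rewrite Rabs_mult, pow_add, Rinv_mult.
  apply Rmult_le_compat; auto using Rabs_pos.
Qed.

Lemma moderateR_plus (x y : R -> R) :
  moderateR rho x -> moderateR rho y -> moderateR rho (fun e => x e + y e).
Proof.
  intros [N1 H1] [N2 H2]; exists (S (N1 + N2)).
  eapply eventually0_mono; [|apply eventually0_and;
    [apply eventually0_and; [exact H1 | exact H2]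
    | apply (eventually0_gauge_lt rho (/ 2)); auto; lra]].
  intros e [[Hx Hy] [Hr Hr2]].
  pose proof (inv_pow_le_mono (rho e) N1 (N1 + N2) Hr ltac:(lia)).
  pose proof (inv_pow_le_mono (rho e) N2 (N1 + N2) Hr ltac:(lia)).
  assert (Hinv : 2 < / rho e).
  { rewrite <- (Rinv_inv 2); apply Rinv_lt_contravar; lra. }
  assert (Hpos : 0 < / rho e ^ (N1 + N2)) by (apply Rinv_0_lt_compat, pow_lt; lra).
  simpl pow; rewrite Rinv_mult.
  eapply Rle_trans; [apply Rabs_triang|]; nra.
Qed.

End ModerateNets.

Definition nat_ceil (y : R) : nat := Z.to_nat (up y).

Lemma nat_ceil_spec (y : R) : 0 <= y -> y <= INR (nat_ceil y) <= y + 1.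
Proof.
  intros Hy; destruct (archimed y) as [Hup Hup1].
  assert (0 <= up y)%Z by (apply le_IZR; lra).
  unfold nat_ceil; rewrite INR_IZR_INZ, Z2Nat.id by assumption; lra.
Qed.

Lemma nat_ceil_le_compat (y z : R) : 0 <= y <= z -> (nat_ceil y <= nat_ceil z)%nat.
Proof.
  intros Hyz; destruct (archimed y); destruct (archimed z).
  assert (up y < up z + 1)%Z by (apply lt_IZR; rewrite plus_IZR; lra).
  unfold nat_ceil; lia.
Qed.

Section HyperLimits.

Variable rho : R -> R.
Hypothesis rho_gauge : is_gauge rho.

(* A negligible net is eventually below [rho^1 < 1], which cannot bridge a gap between naturals. *)
Lemma leRt_INR_le (M n : R -> nat) :
  leRt rho (fun e => INR (M e)) (fun e => INR (n e)) -> eventually0 (fun e => (M e <= n e)%nat).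
Proof.
  intros [z [Hz Hle]].
  eapply eventually0_mono; [|apply eventually0_and; [apply eventually0_and;
    [exact Hle | exact (Hz 1%nat)] | apply (eventually0_gauge_lt rho 1); auto; lra]].
  intros e [[HMn Hz1] [_ Hr]]; rewrite pow_1 in Hz1.
  apply Nat.lt_succ_r, INR_lt; rewrite S_INR; pose proof (Rle_abs (z e)); lra.
Qed.

Lemma ltRt_pow_of_le_half (D : R -> R) (q : nat) :
  eventually0 (fun e => D e <= rho e ^ q / 2) -> ltRt rho D (fun e => rho e ^ q).
Proof.
  intros HD; exists (S q).
  eapply eventually0_mono;
    [|apply eventually0_and; [exact HD | apply (eventually0_gauge_lt rho (/ 2)); auto; lra]].
  intros e [HDe [Hr Hr2]]; pose proof (pow_lt (rho e) q (proj1 Hr)); simpl pow; nra.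
Qed.

Lemma hyperlimit_hpsum (b : nat -> R -> C) (s : R -> C) :
  (forall q, exists M, hypernat rho M /\ eventually0 (fun e => forall n, (M e <= n)%nat ->
     Cmod (csum (fun i => b i e) 0 n - s e) <= rho e ^ q / 2)) ->
  hyperlimit rho (hpsum b) s.
Proof.
  intros Htail q; destruct (Htail q) as [M [HM Hnear]]; exists M; split; [exact HM|].
  intros n _ HMn; apply ltRt_pow_of_le_half.
  eapply eventually0_mono; [|apply eventually0_and; [exact Hnear | apply leRt_INR_le, HMn]].
  intros e [Hbound Hle]; apply Hbound, Hle.
Qed.

End HyperLimits.

(* The index of the largest partial sum among the first [k e] is itself a hypernatural,
   so a single moderateness bound controls all of them. *)
Lemma mod_hypersums_uniform_upto (rho : R -> R) (a : nat -> R -> C) (k : R -> nat) :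
  mod_hypersums rho a -> hypernat rho k ->
  exists NB, eventually0 (fun e => forall j, (j <= k e)%nat ->
    Cmod (csum (fun n => a n e) 0 j) <= / rho e ^ NB).
Proof.
  intros Ha Hk.
  set (jmax := fun e => argmax_upto (fun j => Cmod (csum (fun n => a n e) 0 j)) (k e)).
  assert (Hjmax : hypernat rho jmax).
  { apply (moderateR_le rho _ _ Hk), (eventually0_mono (fun _ => True));
      [|exists 1; split; [lra | auto]].
    intros e _; rewrite !Rabs_right by (apply Rle_ge, pos_INR).
    apply le_INR, argmax_upto_le. }
  destruct (Ha jmax Hjmax) as [NB HNB]; exists NB.
  eapply eventually0_mono; [|exact HNB]; intros e Hbound j Hj.
  eapply Rle_trans; [apply (le_argmax_upto (fun j => Cmod (csum (fun n => a n e) 0 j))), Hj|].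
  exact Hbound.
Qed.

Section RootTest.

Variables (rho : R -> R) (a : nat -> R -> C) (k : R -> nat) (L : R -> R) (m1 NB : nat).
Hypothesis rho_gauge : is_gauge rho.
Hypothesis k_hypernat : hypernat rho k.
Hypothesis root_test : eventually0 (fun e =>
  0 <= L e /\ rho e ^ m1 < 1 - L e /\
  (forall n, (k e < n)%nat -> Cmod (a n e) <= L e ^ n) /\
  (forall j, (j <= k e)%nat -> Cmod (csum (fun n => a n e) 0 j) <= / rho e ^ NB)).

Definition abs_partial_sum (e : R) (N : nat) : R := sum_f_R0 (fun i => Cmod (a i e)) N.

Definition abs_sum_bound (e : R) : R :=
  (INR (k e) + 1) * (2 * / rho e ^ NB) + / rho e ^ m1.

Lemma abs_sum_bound_moderate : moderateR rho abs_sum_bound.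
Proof.
  unfold abs_sum_bound.
  apply moderateR_plus; auto using moderateR_inv_pow.
  apply moderateR_mult; [apply moderateR_plus | apply moderateR_mult];
    auto using moderateR_const, moderateR_inv_pow.
Qed.

Lemma abs_partial_sum_le : eventually0 (fun e => forall N, abs_partial_sum e N <= abs_sum_bound e).
Proof.
  eapply eventually0_mono; [|apply eventually0_and;
    [exact root_test | apply (eventually0_gauge_lt rho 1); auto; lra]].
  intros e [[HL [Hgap [Hroot Hsums]]] [Hr _]] N.
  apply sum_f_R0_le_head_geometric with (Lv := L e); auto using Cmod_ge_0.
  - apply Cmod_le_of_csum_le, Hsums.
  - apply pow_lt; lra.
  - lra.
Qed.

Definition tail_index (p : nat) (e : R) : nat := (k e + nat_ceil (2 / rho e ^ p))%nat.

(* [nat_ceil (/ rho e)] eventually exceeds any fixed exponent [p]. *)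
Definition limit_index (e : R) : nat := tail_index (nat_ceil (/ rho e)) e.

Lemma tail_index_hypernat (p : nat) : hypernat rho (tail_index p).
Proof.
  apply (moderateR_le rho _ (fun e => INR (k e) + (2 * / rho e ^ p + 1))).
  { apply moderateR_plus; auto.
    apply moderateR_plus; auto using moderateR_const.
    apply moderateR_mult; auto using moderateR_const, moderateR_inv_pow. }
  eapply eventually0_mono; [|apply (eventually0_gauge_lt rho 1); auto; lra].
  intros e [Hr _].
  assert (Hinv : 0 < 2 / rho e ^ p) by (apply Rdiv_lt_0_compat, pow_lt; lra).
  destruct (nat_ceil_spec (2 / rho e ^ p)) as [_ Hceil]; [lra|].
  pose proof (pos_INR (k e)); pose proof (pos_INR (nat_ceil (2 / rho e ^ p))).
  unfold tail_index; rewrite plus_INR, !Rabs_right; unfold Rdiv in *; lra.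
Qed.

Lemma tail_index_le_limit_index (p : nat) :
  eventually0 (fun e => (tail_index p e <= limit_index e)%nat).
Proof.
  assert (Hp : 0 < / (INR p + 1)) by (apply Rinv_0_lt_compat; pose proof (pos_INR p); lra).
  eapply eventually0_mono; [|apply (eventually0_gauge_lt rho _ rho_gauge Hp)].
  intros e [Hr Hrp]; unfold limit_index, tail_index.
  apply Nat.add_le_mono_l, nat_ceil_le_compat.
  assert (Hp_le : (p <= nat_ceil (/ rho e))%nat).
  { apply INR_le; destruct (nat_ceil_spec (/ rho e)) as [Hceil _];
      [apply Rlt_le, Rinv_0_lt_compat; lra|].
    apply Rinv_lt_contravar in Hrp; [|pose proof (pos_INR p); nra].
    rewrite Rinv_inv in Hrp; lra. }
  pose proof (inv_pow_le_mono (rho e) _ _ Hr Hp_le).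
  assert (0 < / rho e ^ p) by (apply Rinv_0_lt_compat, pow_lt; lra).
  unfold Rdiv; lra.
Qed.

Lemma abs_partial_sum_cauchy (q : nat) : eventually0 (fun e => forall m n,
  (tail_index (q + 2 * m1) e <= m)%nat -> (tail_index (q + 2 * m1) e <= n)%nat ->
  Rabs (abs_partial_sum e n - abs_partial_sum e m) <= rho e ^ q / 2).
Proof.
  eapply eventually0_mono; [|apply eventually0_and;
    [exact root_test | apply (eventually0_gauge_lt rho 1); auto; lra]].
  intros e [[HL [Hgap [Hroot _]]] [Hr _]] m n Hm Hn.
  set (j := tail_index (q + 2 * m1) e) in *.
  assert (Hx : 0 < rho e ^ m1) by (apply pow_lt; lra).
  assert (Hj : 2 / (rho e ^ q * (rho e ^ m1) ^ 2) <= INR j).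
  { rewrite <- pow_mult, Nat.mul_comm, <- pow_add.
    destruct (nat_ceil_spec (2 / rho e ^ (q + 2 * m1))) as [Hceil _];
      [apply Rlt_le, Rdiv_lt_0_compat, pow_lt; lra|].
    unfold j, tail_index; rewrite plus_INR; pose proof (pos_INR (k e)); lra. }
  apply Rabs_sum_f_R0_sub_le with (j := j); auto using Cmod_ge_0.
  intros N HN; eapply Rle_trans.
  - apply sum_f_R0_sub_le_geometric; [| |exact HN].
    + split; [exact HL | lra].
    + intros i Hi; apply Hroot; unfold j, tail_index in Hi; lia.
  - apply geometric_tail_le with (x := rho e ^ m1); auto; [lra | apply pow_lt; lra].
Qed.

Lemma abs_partial_sum_near_limit (q : nat) : exists M, hypernat rho M /\
  eventually0 (fun e => forall n, (M e <= n)%nat ->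
    Rabs (abs_partial_sum e n - abs_partial_sum e (limit_index e)) <= rho e ^ q / 2).
Proof.
  exists (tail_index (q + 2 * m1)); split; [apply tail_index_hypernat|].
  eapply eventually0_mono; [|apply eventually0_and;
    [apply abs_partial_sum_cauchy | apply (tail_index_le_limit_index (q + 2 * m1))]].
  intros e [Hcauchy Hlimit] n Hn; apply Hcauchy; assumption.
Qed.

Lemma abs_partial_sum_Cmod_le (N : R -> nat) :
  eventually0 (fun e => Cmod (RtoC (abs_partial_sum e (N e))) <= abs_sum_bound e).
Proof.
  eapply eventually0_mono; [|exact abs_partial_sum_le]; intros e Hle.
  rewrite Cmod_R, Rabs_right; [apply Hle|].
  apply Rle_ge, cond_pos_sum; intros; apply Cmod_ge_0.
Qed.

Theorem abs_hyperseries_converges :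
  hyperseries_converges rho (fun n e => RtoC (Cmod (a n e))).
Proof.
  split.
  - intros N _; apply moderateC_of_le with abs_sum_bound; [apply abs_sum_bound_moderate|].
    eapply eventually0_mono; [|apply (abs_partial_sum_Cmod_le N)]; intros e.
    unfold hpsum; rewrite csum_RtoC; auto.
  - exists (fun e => RtoC (abs_partial_sum e (limit_index e))); split.
    + apply moderateC_of_le with abs_sum_bound;
        [apply abs_sum_bound_moderate | apply abs_partial_sum_Cmod_le].
    + apply hyperlimit_hpsum; [exact rho_gauge|]; intros q.
      destruct (abs_partial_sum_near_limit q) as [M [HM Hnear]]; exists M; split; [exact HM|].
      eapply eventually0_mono; [|exact Hnear]; intros e Hle n Hn.
      rewrite csum_RtoC, <- RtoC_minus, Cmod_R; apply Hle, Hn.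
Qed.

Theorem hyperseries_converges_of_root_test :
  mod_hypersums rho a -> hyperseries_converges rho a.
Proof.
  intros Ha; split; [exact Ha|].
  exists (fun e => csum (fun n => a n e) 0 (limit_index e)); split.
  - apply moderateC_of_le with abs_sum_bound; [apply abs_sum_bound_moderate|].
    eapply eventually0_mono; [|exact abs_partial_sum_le]; intros e Hle.
    eapply Rle_trans; [apply Cmod_csum_le | apply Hle].
  - apply hyperlimit_hpsum; [exact rho_gauge|]; intros q.
    destruct (abs_partial_sum_near_limit q) as [M [HM Hnear]]; exists M; split; [exact HM|].
    eapply eventually0_mono; [|exact Hnear]; intros e Hle n Hn.
    eapply Rle_trans; [apply Cmod_csum_sub_le | apply Hle, Hn].
Qed.

End RootTest.

Theorem theorem2p18 (rho : R -> R) (a : nat -> R -> C) (k : R -> nat)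
    (L : R -> R) :
  is_gauge rho ->
  mod_hypersums rho a ->
  hypernat rho k ->
  moderateR rho L ->
  ltRt rho (fun _ => 0) L ->
  eventually0 (fun e => forall n : nat, (k e <= n)%nat -> (1 <= n)%nat ->
                 nroot n (Cmod (a n e)) <= L e) ->
  ltRt rho L (fun _ => 1) ->
  hyperseries_converges rho (fun n e => RtoC (Cmod (a n e))) /\
  hyperseries_converges rho a.
Proof.
  intros Hgauge Ha Hk _ [m0 HLpos] Hroot [m1 HLlt1].
  destruct (mod_hypersums_uniform_upto rho a k Ha Hk) as [NB HNB].
  assert (Htest : eventually0 (fun e =>
    0 <= L e /\ rho e ^ m1 < 1 - L e /\
    (forall n, (k e < n)%nat -> Cmod (a n e) <= L e ^ n) /\
    (forall j, (j <= k e)%nat -> Cmod (csum (fun n => a n e) 0 j) <= / rho e ^ NB))).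
  { eapply eventually0_mono; [|apply eventually0_and;
      [apply eventually0_and; [exact HLpos | exact HLlt1]
      | apply eventually0_and;
        [apply eventually0_and; [exact Hroot | exact HNB]
        | apply (eventually0_gauge_lt rho 1); auto; lra]]].
    intros e [[Hpos Hlt1] [[Hroot_e Hsums] [Hr _]]].
    pose proof (pow_lt (rho e) m0 (proj1 Hr)).
    repeat split; [lra | lra | | exact Hsums].
    intros n Hn; apply le_pow_of_nroot_le; [lia | apply Cmod_ge_0 | apply Hroot_e; lia]. }
  split.
  - apply (abs_hyperseries_converges rho a k L m1 NB); assumption.
  - apply (hyperseries_converges_of_root_test rho a k L m1 NB); assumption.
Qed.
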